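(* There is a topological space of size $2^{2^{\mathfrak{c}}}$ which is $nwd$-separable, but neither $d$-separable nor $NWD$-separable.
   Context: A space is $nwd$-separable if it has a dense subset which is a countable union of nowhere dense sets; $d$-separable if it has a dense subset which is a countable union of discrete subspaces. A space $X$ is $NWD$-separable if for every sequence $\{D_n:n<\omega\}$ of dense subsets of $X$ there are nowhere dense sets $E_n\subseteq D_n$ such that $\bigcup_{n<\omega}E_n$ is dense. $\mathfrak{c}=2^{\aleph_0}$. *)

From HB Require Import structures.
From mathcomp Require Import all_boot all_order.
From mathcomp Require Import boolp classical_sets functions cardinality topology.
Set Implicit Arguments. Unset Strict Implicit. Unset Printing Implicit Defensive.
Local Open Scope classical_set_scope.

Definition nowhere_dense (T : topologicalType) (A : set T) : Prop :=
  interior (closure A) = set0.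

Definition discrete_subspace (T : topologicalType) (A : set T) : Prop :=
  forall x, A x -> exists U : set T, open U /\ U x /\ U `&` A = [set x].

Definition nwd_separable (T : topologicalType) : Prop :=
  exists E : nat -> set T, (forall n, nowhere_dense (E n)) /\
    dense (\bigcup_n E n).

Definition d_separable (T : topologicalType) : Prop :=
  exists E : nat -> set T, (forall n, discrete_subspace (E n)) /\
    dense (\bigcup_n E n).

Definition NWD_separable (T : topologicalType) : Prop :=
  forall D : nat -> set T, (forall n, dense (D n)) ->
  exists E : nat -> set T, (forall n, E n `<=` D n /\ nowhere_dense (E n)) /\
    dense (\bigcup_n E n).

From HB Require Import structures.
From mathcomp Require Import all_boot.
From mathcomp Require Import boolp classical_sets cardinality topology.
Local Open Scope classical_set_scope.
Local Open Scope card_scope.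

(* Split a set into uncountable "levels" 0, 1, 2, ... and a top level, and take
   as basic open sets "level at least b, minus a countable set".  Countable sets
   are then never dense, and a discrete subspace is countable (a point of lowest
   level isolates it up to a countable set), so the space is not d-separable.
   Each finite level is nowhere dense while their union is dense, giving
   nwd-separability.  Finally the top level is dense, but each of its nowhere
   dense subsets is countable (an uncountable one would be dense), so no
   countable union of them is dense: the space is not NWD-separable.  On
   set (set (set nat)) the level of y is some n with [set [set n]] in y, if any;
   every level has at least 2^c elements. *)

Lemma countable_setU {T : Type} {A B : set T} :
  countable A -> countable B -> countable (A `|` B).
Proof.
move=> cA cB.
have -> : A `|` B = \bigcup_(i in [set: bool]) (if i then A else B).
  apply/seteqP; split=> x.
  - by case=> Ax; [exists true | exists false].
  - by case=> -[] _ Ax; [left | right].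
by apply: bigcup_countable; [exact: countableP | case].
Qed.

Lemma uncountable_setD_neq0 {T : Type} {A C : set T} :
  ~ countable A -> countable C -> A `\` C !=set0.
Proof.
move=> nA cC; apply: contrapT => nAC; apply: nA.
apply: (sub_countable _ cC); apply: subset_card_le => y Ay.
by apply: contrapT => nCy; apply: nAC; exists y.
Qed.

(* [None] is the top level. *)
Definition level_ge (b : nat) (o : option nat) : Prop :=
  if o is Some n then (b <= n)%N else True.

Lemma level_ge_max b1 b2 o :
  level_ge (maxn b1 b2) o <-> level_ge b1 o /\ level_ge b2 o.
Proof. by case: o => [n|] //=; rewrite geq_max; split=> [/andP|[-> ->]]. Qed.

Section LevelTopology.
Variables (T : Type) (lev : T -> option nat).

Definition above (b : nat) : set T := [set y | level_ge b (lev y)].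

Definition level_open (U : set T) : Prop := forall x, U x ->
  exists b C, [/\ countable C, (above b `\` C) x & above b `\` C `<=` U].

Lemma level_openT : level_open setT.
Proof.
by move=> x _; exists 0%N, set0; split=> //; split=> //; rewrite /above /=; case: (lev x).
Qed.

Lemma level_openI : setI_closed level_open.
Proof.
move=> U V oU oV x [Ux Vx].
have [b1 [C1 [cC1 [ab1 nC1x] sU]]] := oU x Ux.
have [b2 [C2 [cC2 [ab2 nC2x] sV]]] := oV x Vx.
exists (maxn b1 b2), (C1 `|` C2); split; first exact: countable_setU.
- by split; [exact/level_ge_max | case].
- move=> y [/level_ge_max [y1 y2] nCy]; split.
  + by apply: sU; split=> // ?; apply: nCy; left.
  + by apply: sV; split=> // ?; apply: nCy; right.
Qed.

Lemma level_open_bigcup (I : Type) (f : I -> set T) :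
  (forall i, level_open (f i)) -> level_open (\bigcup_i f i).
Proof.
move=> ofi x [i _ fxi].
have [b [C [cC BCx sf]]] := ofi i x fxi.
by exists b, C; split=> // y /sf; exists i.
Qed.

End LevelTopology.

Arguments above {T}.
Arguments level_open {T}.

Definition levelled {T : Type} (lev : T -> option nat) : Type := T.

HB.instance Definition _ T lev := gen_eqMixin (@levelled T lev).
HB.instance Definition _ T lev := gen_choiceMixin (@levelled T lev).
HB.instance Definition _ T lev := isOpenTopological.Build (@levelled T lev)
  (@level_openT T lev) (@level_openI T lev) (@level_open_bigcup T lev).

Section LevelledSpace.
Variables (T : Type) (lev : T -> option nat).
Hypothesis level_uncountable : forall o, ~ countable (lev @^-1` [set o]).
Local Notation X := (levelled lev).

Lemma open_levelledE (A : set X) : open A = level_open lev A.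
Proof. by []. Qed.

Lemma open_above_setD b {C : set X} :
  countable C -> open (above lev b `\` C : set X).
Proof. by move=> cC; rewrite open_levelledE => x BCx; exists b, C; split. Qed.

Lemma nbhs_levelledP (x : X) (A : set X) : nbhs x A <->
  exists b C, [/\ countable C, (above lev b `\` C) x & above lev b `\` C `<=` A].
Proof.
rewrite nbhsE; split.
- move=> [B [+ Bx] sBA]; rewrite open_levelledE => oB.
  have [b [C [cC BCx sB]]] := oB x Bx.
  by exists b, C; split=> // y /sB /sBA.
- move=> [b [C [cC BCx sA]]]; exists (above lev b `\` C) => //.
  by split=> //; exact: open_above_setD.
Qed.

Lemma level_meets_above_setD o b {C : set T} : countable C -> level_ge b o ->
  exists y, lev y = o /\ (above lev b `\` C) y.
Proof.
move=> cC bo; have [y [lyo nCy]] := uncountable_setD_neq0 (level_uncountable o) cC.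
by exists y; split=> //; split=> //; rewrite /above /= lyo.
Qed.

Lemma countable_not_dense (U : set X) : countable U -> ~ dense U.
Proof.
move=> cU dU; have [y [_ BUy]] := level_meets_above_setD None 0 cU I.
have [z [[_ nUz] Uz]] := dU _ (ex_intro _ y BUy) (open_above_setD 0 cU).
exact: nUz Uz.
Qed.

Lemma level_nowhere_dense n : nowhere_dense (lev @^-1` [set Some n] : set X).
Proof.
apply/seteqP; split=> // x /nbhs_levelledP [b [C [cC _ sBC]]].
have [y [ly BCy]] := level_meets_above_setD None b cC I.
have [|z [/= lz]] := sBC y BCy (above lev n.+1).
  by apply/nbhs_levelledP; exists n.+1, set0; split; rewrite ?setD0 // /above /= ly.
by rewrite /above /= lz /= ltnn.
Qed.

Lemma dense_top_level : dense (lev @^-1` [set None] : set X).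
Proof.
move=> O [x Ox]; rewrite open_levelledE => oO; have [b [C [cC _ sO]]] := oO x Ox.
have [y [ly BCy]] := level_meets_above_setD None b cC I.
by exists y; split; [exact: sO|].
Qed.

Lemma exists_lowest_level {S : set T} : S !=set0 ->
  exists2 x, S x & forall b, above lev b x -> S `<=` above lev b.
Proof.
move=> [y0 Sy0].
have [[n [y Sy lyn]]|noSome] :=
  pselect (exists n, exists2 y, S y & lev y = Some n).
- have exn : exists n, `[< exists2 y, S y & lev y = Some n >].
    by exists n; apply/asboolP; exists y.
  case: (ex_minnP exn) => k /asboolP [x Sx lxk] mink.
  exists x => // b; rewrite /above /= lxk /= => bk z Sz /=.
  case lz: (lev z) => [j|] //=; apply: leq_trans bk (mink j _).
  by apply/asboolP; exists z.
- exists y0 => // b _ z Sz; rewrite /above /=.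
  by case lz: (lev z) => [j|] //; case: noSome; exists j, z.
Qed.

Lemma discrete_subspace_countable (S : set X) :
  discrete_subspace S -> countable S.
Proof.
move=> dS; have [->|/set0P S0] := eqVneq S set0; first exact: countable0.
have [x Sx lowx] := exists_lowest_level S0.
have [U [oU [Ux USx]]] := dS x Sx; rewrite open_levelledE in oU.
have [b [C [cC [bx _] sU]]] := oU x Ux.
apply: (sub_countable _ (countable_setU cC (countable1 x))).
apply: subset_card_le => z Sz; have [Cz|nCz] := pselect (C z); [by left|right].
by rewrite -USx; split=> //; apply: sU; split=> //; exact: lowx bx _ Sz.
Qed.

Lemma countable_nowhere_dense_top (E : set X) :
  E `<=` lev @^-1` [set None] -> nowhere_dense E -> countable E.
Proof.
move=> Etop Enwd; apply: contrapT => nE.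
have clE : closure E = setT.
  apply/seteqP; split=> // x _ A /nbhs_levelledP [b [C [cC _ sA]]].
  have [y [Ey nCy]] := uncountable_setD_neq0 nE cC.
  by exists y; split=> //; apply: sA; split=> //; rewrite /above /= (Etop _ Ey).
have [y _] := uncountable_setD_neq0 nE (countable0 _).
have : [set: X] y by [].
by move: Enwd; rewrite /nowhere_dense clE interiorT => ->.
Qed.

Lemma levelled_nwd_separable : nwd_separable X.
Proof.
exists (fun n => lev @^-1` [set Some n]); split; first exact: level_nowhere_dense.
move=> O [x Ox]; rewrite open_levelledE => oO; have [b [C [cC _ sO]]] := oO x Ox.
have [y [lyb BCy]] := level_meets_above_setD (Some b) b cC (leqnn b).
by exists y; split; [exact: sO | exists b].
Qed.

Lemma levelled_not_d_separable : ~ d_separable X.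
Proof.
move=> [E [Edisc Edense]]; apply: countable_not_dense Edense.
apply: bigcup_countable; first exact: countableP.
by move=> n _; exact: discrete_subspace_countable.
Qed.

Lemma levelled_not_NWD_separable : ~ NWD_separable X.
Proof.
move=> /(_ (fun=> _) (fun=> dense_top_level)) [E [Enwd Edense]].
apply: countable_not_dense Edense.
apply: bigcup_countable; first exact: countableP.
by move=> n _; have [Etop nwd] := Enwd n; exact: countable_nowhere_dense_top.
Qed.

End LevelledSpace.

Lemma not_injective_set_nat (h : set nat -> nat) : ~ injective h.
Proof.
move=> hinj; pose P := [set n | exists2 Q, h Q = n & ~ Q n].
have [PhP|nPhP] := pselect (P (h P)).
- by case: (PhP) => Q /hinj -> /(_ PhP).
- by apply: (nPhP); exists P.
Qed.

Definition code_nat (n : nat) : set (set nat) := [set [set n]].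
Definition code_set (P : set nat) : set (set nat) := [set set0; P].

Definition set3_level (y : set (set (set nat))) : option nat :=
  if pselect (exists n, y (code_nat n)) is left h then Some (projT1 (cid h))
  else None.

(* Injective in [P] because [code_set P] contains [set0], so it is never some
   [code_nat n]. *)
Definition set3_level_elem (o : option nat) (P : set nat) : set (set (set nat)) :=
  code_set P |` (if o is Some n then [set code_nat n] else set0).

Lemma code_nat_inj : injective code_nat.
Proof.
move=> m n mn; have : code_nat n [set m] by rewrite -mn.
by move=> /(congr1 (@^~ m)); rewrite /= => <-.
Qed.

Lemma code_nat_neq_code_set n P : code_nat n <> code_set P.
Proof.
move=> nP; have : code_nat n set0 by rewrite nP; left.
by move=> /(congr1 (@^~ n)) /= ->.
Qed.

Lemma code_set_inj : injective code_set.
Proof.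
move=> P Q PQ.
have : code_set Q P by rewrite -PQ; right.
have : code_set P Q by rewrite PQ; right.
by case=> [->|//] [->|].
Qed.

Lemma set3_level_elemK o P : set3_level (set3_level_elem o P) = o.
Proof.
rewrite /set3_level; case: pselect => [h|h].
- case: (cid h) => k /= [/code_nat_neq_code_set []|].
  by case: o {h} => [n /code_nat_inj ->|].
- by case: o h => [n h|//]; case: h; exists n; right.
Qed.

Lemma set3_level_elem_inj o : injective (set3_level_elem o).
Proof.
move=> P Q PQ; apply: code_set_inj.
have : set3_level_elem o P (code_set Q) by rewrite PQ; left.
case=> [->//|]; case: o {PQ} => [n /= /esym/code_nat_neq_code_set []|[]].
Qed.

Lemma set3_level_uncountable o : ~ countable (set3_level @^-1` [set o]).
Proof.
move=> /countable_injP [g ginj].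
apply: (@not_injective_set_nat (g \o set3_level_elem o)) => P Q /ginj PQ.
by apply: set3_level_elem_inj; apply: PQ; rewrite inE /= set3_level_elemK.
Qed.

Theorem mainTheorem11 :
  exists T : topologicalType,
    [set: T] #= [set: set (set (set nat))] /\
    nwd_separable T /\ ~ d_separable T /\ ~ NWD_separable T.
Proof.
exists (levelled set3_level); split; first exact: card_eqxx.
have level_uncountable := set3_level_uncountable.
split; first exact: levelled_nwd_separable.
split; first exact: levelled_not_d_separable.
exact: levelled_not_NWD_separable.
Qed.
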